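(* For all integers $m$ and $n$, \[ \sum_{k = 1}^n ( - 1)^{k - 1} F_{mk}^{\,4} = \frac{F_{mn} F_{mn + m} \left\{ (-1)^{n-1}L_m L_{mn} L_{mn + m} + (-1)^{n(m-1)}4L_{2m} \right\}}{5L_m L_{2m}}\,. \]
   Context: $F_i$ and $L_i$ denote the Fibonacci and Lucas numbers, defined for all $i\in\mathbb{Z}$ by $F_i=F_{i-1}+F_{i-2}$, $F_0=0$, $F_1=1$, and $L_i=L_{i-1}+L_{i-2}$, $L_0=2$, $L_1=1$; equivalently $F_{-i}=(-1)^{i-1}F_i$ and $L_{-i}=(-1)^iL_i$. Summation convention for an arbitrary integer upper limit: $\sum_{k=a}^{a-1} f(k)=0$, and for $n<a-1$, $\sum_{k=a}^{n} f(k) = -\sum_{k=n+1}^{a-1} f(k)$. *)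

From mathcomp Require Import all_boot all_order all_algebra.
Set Implicit Arguments. Unset Strict Implicit. Unset Printing Implicit Defensive.
Import Order.TTheory GRing.Theory Num.Theory.
Local Open Scope ring_scope.

Fixpoint fibn (n : nat) : int :=
  match n with
  | 0 => 0
  | 1 => 1
  | (m.+1 as k).+1 => fibn k + fibn m
  end.

Fixpoint lucn (n : nat) : int :=
  match n with
  | 0 => 2
  | 1 => 1
  | (m.+1 as k).+1 => lucn k + lucn m
  end.

(* Extension to all integers: F_{-i} = (-1)^(i-1) F_i, L_{-i} = (-1)^i L_i.
   Negz n denotes -(n+1). *)
Definition F (z : int) : int :=
  match z with
  | Posz n => fibn n
  | Negz n => (-1) ^+ n * fibn n.+1
  end.

Definition L (z : int) : int :=
  match z with
  | Posz n => lucn n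
  | Negz n => (-1) ^+ n.+1 * lucn n.+1
  end.

(* Sum over integer range with the standard convention:
   sumZ a n f = \sum_{k=a}^n f k  if n >= a-1 (empty when n = a-1),
              = - \sum_{k=n+1}^{a-1} f k  if n < a-1. *)
Definition sumZ (R : zmodType) (a n : int) (f : int -> R) : R :=
  let up : nat := absz (n + 1 - a)%R in
  let dn : nat := absz (a - 1 - n)%R in
  if (a <= n + 1)%R then
    \sum_(0 <= i < up) f (a + i%:Z)
  else
    - \sum_(0 <= i < dn) f (n + 1 + i%:Z).

Example F_neg3 : F (-3) = 2. Proof. by []. Qed.
Example F_neg4 : F (-4) = -3. Proof. by []. Qed.
Example L_neg3 : L (-3) = -4. Proof. by []. Qed.
Example L_neg2 : L (-2) = 3. Proof. by []. Qed.
Example sum_chk : sumZ 1 3 (fun k => k) = 6. Proof. by rewrite /sumZ /= !big_nat_recr //= big_geq. Qed.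

(* With G k the right-hand side at n = k, the sum telescopes as soon as
   G (k + 1) - G k = (-1)^k F_{m(k+1)}^4.  For a = m(k+1) and b = m this difference
   reduces, through F_{a+b} L_{a+b} + F_{a-b} L_{a-b} = F_a L_a L_{2b} and
   F_{a+b} + (-1)^b F_{a-b} = F_a L_b, to L_a^2 - 4(-1)^a = 5 F_a^2.  Each identity of
   this kind compares two functions of b satisfying the Fibonacci recurrence on all
   of Z, so it only has to be checked at b = 0 and b = 1. *)

From mathcomp Require Import all_boot all_order all_algebra.
From mathcomp Require Import ring zify.

Set Implicit Arguments.
Unset Strict Implicit.
Unset Printing Implicit Defensive.
Import Order.TTheory GRing.Theory Num.Theory.
Local Open Scope ring_scope.

Section SignPowers.
Variable R : unitRingType.

Lemma expN1zD (x y : int) : (-1 : R) ^ (x + y) = (-1) ^ x * (-1) ^ y.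
Proof. exact/exprzDr/unitrN1. Qed.

Lemma expN1zN (x : int) : (-1 : R) ^ (- x) = (-1) ^ x.
Proof. by rewrite -exprz_inv invrN1. Qed.

Lemma expN1zB (x y : int) : (-1 : R) ^ (x - y) = (-1) ^ x * (-1) ^ y.
Proof. by rewrite expN1zD expN1zN. Qed.

Lemma sqr_expN1z (x : int) : ((-1 : R) ^ x) ^+ 2 = 1.
Proof. by rewrite expr2 -expN1zB subrr. Qed.

Lemma intr_expN1z (x : int) : ((-1 : int) ^ x)%:~R = (-1 : R) ^ x.
Proof. by rewrite (rmorphXz _ _ (unitrN1 _)) rmorphN1. Qed.

End SignPowers.

Definition fib_like {R : zmodType} (u : int -> R) := forall z, u (z + 2) = u (z + 1) + u z.

Lemma int_ind_step (P : int -> Prop) : P 0 -> (forall z, P z -> P (z + 1)) ->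
  (forall z, P (z + 1) -> P z) -> forall z, P z.
Proof.
move=> P0 PS PP; elim/int_rect => // n Pn.
- by rewrite -addn1 PoszD; apply: PS.
- by apply: PP; rewrite -addn1 PoszD opprD subrK.
Qed.

Lemma F_fib_like : fib_like F.
Proof.
case=> [n|[|[|n]]] //; rewrite /F.
- by rewrite -[2]/(Posz 2) -[1]/(Posz 1) -!PoszD addn1 addn2.
- rewrite (_ : Negz n.+2 + 2 = Negz n); last by rewrite !NegzE; ring.
  rewrite (_ : Negz n.+2 + 1 = Negz n.+1); last by rewrite !NegzE; ring.
  by rewrite (_ : fibn n.+3 = fibn n.+2 + fibn n.+1) // !exprS; ring.
Qed.

Lemma L_fib_like : fib_like L.
Proof.
case=> [n|[|[|n]]] //; rewrite /L.
- by rewrite -[2]/(Posz 2) -[1]/(Posz 1) -!PoszD addn1 addn2.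
- rewrite (_ : Negz n.+2 + 2 = Negz n); last by rewrite !NegzE; ring.
  rewrite (_ : Negz n.+2 + 1 = Negz n.+1); last by rewrite !NegzE; ring.
  by rewrite (_ : lucn n.+3 = lucn n.+2 + lucn n.+1) // !exprS; ring.
Qed.

Section FibLike.
Variable R : unitRingType.
Implicit Types u v : int -> R.

Lemma fib_like_pred u z : fib_like u -> u (z + 1) = u z + u (z - 1).
Proof. by move=> fu; rewrite -[z in u (z + 1)](subrK 1) -addrA fu subrK. Qed.

Lemma fib_likeD u v : fib_like u -> fib_like v -> fib_like (fun z => u z + v z).
Proof. by move=> fu fv z; rewrite fu fv addrACA. Qed.

Lemma fib_likeB u v : fib_like u -> fib_like v -> fib_like (fun z => u z - v z).
Proof. by move=> fu fv z; rewrite fu fv opprD addrACA. Qed.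

Lemma fib_likeMl c u : fib_like u -> fib_like (fun z => c * u z).
Proof. by move=> fu z; rewrite fu mulrDr. Qed.

Lemma fib_like_addl c u : fib_like u -> fib_like (fun z => u (c + z)).
Proof. by move=> fu z /=; rewrite !(addrA c) fu. Qed.

Lemma fib_like_reflect c u : fib_like u -> fib_like (fun z => (-1) ^ z * u (c - z)).
Proof.
move=> fu z /=; set w := c - (z + 2).
have -> : c - z = w + 2 by rewrite /w; ring.
have -> : c - (z + 1) = w + 1 by rewrite /w; ring.
rewrite fu.
by rewrite !expN1zD expr1z mulrNN mulrDr addrA mulrN1 mulNr addNr add0r !mulr1.
Qed.

Lemma fib_like_eq u v : fib_like u -> fib_like v -> u 0 = v 0 -> u 1 = v 1 ->
  forall z, u z = v z.
Proof.
move=> fu fv u0 u1.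
suff uv z : u z = v z /\ u (z + 1) = v (z + 1) by move=> z; case: (uv z).
elim/int_ind_step: z => [|z [uz uz1]|z [uz1 uz2]]; first by rewrite add0r.
- by split; rewrite // -addrA fu fv uz uz1.
- split=> //; apply: (addrI (u (z + 1))).
  by rewrite -fu [in RHS]uz1 -fv; rewrite -addrA in uz2.
Qed.

End FibLike.

Lemma L_add1_sub1 z : L (z + 1) + L (z - 1) = 5 * F z.
Proof.
rewrite (addrC z 1) (addrC z (-1)); move: z.
apply: (fib_like_eq (u := fun z => L (1 + z) + L (-1 + z))) => //.
exact: fib_likeD (fib_like_addl _ L_fib_like) (fib_like_addl _ L_fib_like).
exact: fib_likeMl F_fib_like.
Qed.

Lemma F_add_sub a b : F (a + b) + (-1) ^ b * F (a - b) = F a * L b.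
Proof.
move: b; apply: (fib_like_eq (u := fun b => F (a + b) + (-1) ^ b * F (a - b))).
- exact: fib_likeD (fib_like_addl _ F_fib_like) (fib_like_reflect _ F_fib_like).
- exact: fib_likeMl L_fib_like.
- by rewrite /= addr0 expr0z mul1r; ring.
- by rewrite /= (fib_like_pred _ F_fib_like) expr1z mulN1r mulr1 addrK.
Qed.

Lemma L_add_sub a b : L (a + b) + (-1) ^ b * L (a - b) = L a * L b.
Proof.
move: b; apply: (fib_like_eq (u := fun b => L (a + b) + (-1) ^ b * L (a - b))).
- exact: fib_likeD (fib_like_addl _ L_fib_like) (fib_like_reflect _ L_fib_like).
- exact: fib_likeMl L_fib_like.
- by rewrite /= addr0 expr0z mul1r; ring.
- by rewrite /= (fib_like_pred _ L_fib_like) expr1z mulN1r mulr1 addrK.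
Qed.

Lemma L_add_subN a b : L (a + b) - (-1) ^ b * L (a - b) = 5 * F a * F b.
Proof.
move: b; apply: (fib_like_eq (u := fun b => L (a + b) - (-1) ^ b * L (a - b))).
- exact: fib_likeB (fib_like_addl _ L_fib_like) (fib_like_reflect _ L_fib_like).
- exact: fib_likeMl F_fib_like.
- by rewrite /= addr0 expr0z mul1r subrr mulr0.
- by rewrite /= expr1z mulN1r opprK mulr1 L_add1_sub1.
Qed.

Lemma F_double z : F (2 * z) = F z * L z.
Proof. by rewrite mulr_natl mulr2n -F_add_sub subrr mulr0 addr0. Qed.

Lemma L_sqr z : L z ^+ 2 = 5 * F z ^+ 2 + 4 * (-1) ^ z.
Proof.
have := L_add_subN z z; have := L_add_sub z z; rewrite subrr => eP eN.
rewrite !expr2 mulrA -eP -eN -[L 0]/2; ring.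
Qed.

Lemma L_neq0 z : L z != 0.
Proof.
apply/eqP => Lz0; have := L_sqr z; rewrite Lz0.
have := sqrf_eq1 ((-1 : int) ^ z); rewrite sqr_expN1z eqxx.
by case/esym/orP=> /eqP ->; nia.
Qed.

Lemma F_add_sub_double a b :
  F (a + b) * L (a + b) + F (a - b) * L (a - b) = F a * L a * L (2 * b).
Proof.
rewrite -!F_double mulrDr mulrBr -F_add_sub.
suff -> : (-1) ^ (2 * b) = 1 :> int by rewrite mul1r.
by rewrite mulr_natl mulr2n expN1zD -expr2 sqr_expN1z.
Qed.

Lemma fib4_step_core a b :
  L b * L a * (F (a + b) * L (a + b) + F (a - b) * L (a - b))
    - 4 * L (2 * b) * (-1) ^ a * (F (a + b) + (-1) ^ b * F (a - b))
  = 5 * L b * L (2 * b) * F a ^+ 3.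
Proof.
rewrite F_add_sub_double F_add_sub.
transitivity (L b * L (2 * b) * F a * (L a ^+ 2 - 4 * (-1) ^ a)); first by ring.
by rewrite L_sqr addrK; ring.
Qed.

Definition fib4_numer (m k : int) : int :=
  F (m * k) * F (m * k + m) *
    ((-1) ^ (k - 1) * L m * L (m * k) * L (m * k + m) + (-1) ^ (k * (m - 1)) * 4 * L (2 * m)).

Lemma fib4_numer0 m : fib4_numer m 0 = 0.
Proof. by rewrite /fib4_numer mulr0 !mul0r. Qed.

Lemma fib4_numer_step m k :
  fib4_numer m (k + 1) - fib4_numer m k
  = (-1) ^ k * F (m * (k + 1)) ^+ 4 * (5 * L m * L (2 * m)).
Proof.
have := fib4_step_core (m * k + m) m; rewrite addrK /fib4_numer => core.
rewrite (_ : m * (k + 1) = m * k + m) ?addrK; last by ring.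
rewrite (_ : k * (m - 1) = m * k + m - m - k); last by ring.
rewrite (_ : (k + 1) * (m - 1) = m * k + m - k - 1); last by ring.
rewrite !expN1zB expr1z.
transitivity ((-1) ^ k * F (m * k + m) * (5 * L m * L (2 * m) * F (m * k + m) ^+ 3)).
  by rewrite -core; ring.
ring.
Qed.

Section Telescope.
Variables (R : zmodType) (g G : int -> R).
Hypothesis G_diff : forall z, G (z + 1) - G z = g (z + 1).

Lemma sum_nat_telescope (c : int) (N : nat) :
  \sum_(0 <= i < N) g (c + i%:Z) = G (c - 1 + N%:Z) - G (c - 1).
Proof.
rewrite (@telescope_sumr_eq _ 0 N (fun i : nat => G (c - 1 + i%:Z))) ?addr0 // => i _.
by rewrite -addn1 PoszD addrA G_diff; congr g; ring.
Qed.

Lemma sumZ_telescope (a n : int) : sumZ a n g = G n - G (a - 1).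
Proof.
rewrite /sumZ; case: ifP => [le_an1 | /negbT lt_n1a]; rewrite sum_nat_telescope gez0_abs.
- by congr (G _ - _); ring.
- lia.
- by rewrite addrK subrKC opprB.
- lia.
Qed.

End Telescope.

Theorem theorem3 (m n : int) :
  sumZ 1 n (fun k : int => (-1 : rat) ^ (k - 1) * ((F (m * k))%:~R) ^+ 4)
  = ((F (m * n))%:~R * (F (m * n + m))%:~R *
      ((-1 : rat) ^ (n - 1) * (L m)%:~R * (L (m * n))%:~R * (L (m * n + m))%:~R
       + (-1 : rat) ^ (n * (m - 1)) * 4 * (L (2 * m))%:~R))
    / (5 * (L m)%:~R * (L (2 * m))%:~R).
Proof.
have D_neq0 : (5 * L m * L (2 * m))%:~R != 0 :> rat.
  by rewrite intr_eq0 !mulf_neq0 ?L_neq0.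
transitivity ((fib4_numer m n)%:~R / (5 * L m * L (2 * m))%:~R : rat); last first.
  by rewrite /fib4_numer !(rmorphM, rmorphD) /= !intr_expN1z.
rewrite (sumZ_telescope (G := fun k => (fib4_numer m k)%:~R / (5 * L m * L (2 * m))%:~R)).
  by rewrite subrr fib4_numer0 mul0r subr0.
move=> k; rewrite -mulrBl -rmorphB fib4_numer_step addrK.
by rewrite rmorphM mulfK // rmorphM /= intr_expN1z rmorphXn.
Qed.
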